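(* Let $\mathcal C$ be a $C^2$ convex curve with total curvature satisfying $\int_{\mathcal C}\kappa\,ds\le\pi$ that intersects a circle of radius $R$ in three or more points. Then there is a point on $\mathcal C$ with curvature $\kappa=1/R$.
   Context: Curves are of class $C^2$ with nonvanishing first and second derivative vectors, oriented so that the curvature $\kappa$ is positive (convex curves). $s$ denotes arclength and $\int_{\mathcal C}\kappa\,ds$ is the total curvature, i.e. the total change of the angle of the tangent vector along $\mathcal C$. *)

From Stdlib Require Import Reals.
From Coquelicot Require Import Coquelicot.
Open Scope R_scope.

(* A plane curve t |-> (x t, y t).  It is C^2: twice differentiable
   with continuous second derivative (we take x, y defined on all of R;
   only the restriction to [a,b] matters). *)
Definition C2 (f : R -> R) : Prop :=
  forall t, ex_derive f t /\ ex_derive (Derive f) t /\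
            continuous (Derive (Derive f)) t.

Definition curvature (x y : R -> R) (t : R) : R :=
  (Derive x t * Derive (Derive y) t - Derive y t * Derive (Derive x) t)
  / Rpower (Derive x t ^ 2 + Derive y t ^ 2) (3/2).

Definition speed (x y : R -> R) (t : R) : R :=
  sqrt (Derive x t ^ 2 + Derive y t ^ 2).

Definition total_curvature (x y : R -> R) (a b : R) : R :=
  RInt (fun t => curvature x y t * speed x y t) a b.

Definition on_circle (x y : R -> R) (cx cy r t : R) : Prop :=
  (x t - cx) ^ 2 + (y t - cy) ^ 2 = r ^ 2.

Definition same_point (x y : R -> R) (s t : R) : Prop :=
  x s = x t /\ y s = y t.

(* If the curvature never equals 1/R then, by continuity, it stays below 1/R or stays
   above it.  Order the three points on the circle as s1 < s2 < s3; by the hypothesis on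
   the total curvature the tangent turns by at most pi between any two of them.
   If the curve is flatter than the circle, the parallel curve at distance R along the
   inner normal n moves along the tangent, so each of its chords lies between the
   normals at its ends.  For two points
   on the circle this means that the curve enters the disk at the first and leaves it at
   the second.  At s2 it would then have to both leave and enter.
   If the curve is more curved than the circle, the curvature is bounded below by some
   1/rho > 1/R.  Comparing support functions shows that the whole arc lies in the disk
   of radius rho tangent to it at any of its points, hence strictly inside the tangent
   disk of radius R.  Put the centre of the circle at the origin and let n_i be the normal
   at the point p_i: the cross product p_i x p_j then has the sign of p_i x n_i for
   both j <> i, which no three indices can satisfy. *)

From Stdlib Require Import Reals Lra Psatz Classical.
From Coquelicot Require Import Coquelicot.
Open Scope R_scope.

(** * Calculus on the real line *)

(* Coquelicot's combinators are stated with [plus], [mult], ... of an abstract normed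
   module; these versions over [R] unify with [+] and [*]. *)
Lemma is_derive_eq (f : R -> R) t l l' : is_derive f t l -> l = l' -> is_derive f t l'.
Proof. now intros H <-. Qed.

Lemma is_derive_Rconst (c t : R) : is_derive (fun _ => c) t 0.
Proof. exact (is_derive_const c t). Qed.

Lemma is_derive_Rplus (f g : R -> R) t df dg :
  is_derive f t df -> is_derive g t dg -> is_derive (fun s => f s + g s) t (df + dg).
Proof. exact (is_derive_plus f g t df dg). Qed.

Lemma is_derive_Rminus (f g : R -> R) t df dg :
  is_derive f t df -> is_derive g t dg -> is_derive (fun s => f s - g s) t (df - dg).
Proof. exact (is_derive_minus f g t df dg). Qed.

Lemma is_derive_Rmult (f g : R -> R) t df dg :
  is_derive f t df -> is_derive g t dg ->
  is_derive (fun s => f s * g s) t (df * g t + f t * dg).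
Proof. intros Hf Hg. apply (is_derive_mult f g t df dg Hf Hg). exact Rmult_comm. Qed.

Lemma is_derive_Ropp (f : R -> R) t df : is_derive f t df -> is_derive (fun s => - f s) t (- df).
Proof. exact (is_derive_opp f t df). Qed.

Lemma is_derive_cos_comp (f : R -> R) t df :
  is_derive f t df -> is_derive (fun s => cos (f s)) t (- sin (f t) * df).
Proof.
  intros Hf. eapply is_derive_eq; [exact (is_derive_comp cos f t _ _ (is_derive_cos (f t)) Hf) |].
  cbn. unfold mult; cbn. ring.
Qed.

Lemma is_derive_sin_comp (f : R -> R) t df :
  is_derive f t df -> is_derive (fun s => sin (f s)) t (cos (f t) * df).
Proof.
  intros Hf. eapply is_derive_eq; [exact (is_derive_comp sin f t _ _ (is_derive_sin (f t)) Hf) |].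
  cbn. unfold mult; cbn. ring.
Qed.

Lemma is_derive_comp_opp (f : R -> R) t df :
  is_derive f (- t) df -> is_derive (fun s => f (- s)) t (- df).
Proof.
  intros Hf. eapply is_derive_eq.
  - apply (is_derive_comp f Ropp t df (-1) Hf).
    eapply is_derive_eq; [apply is_derive_Ropp, is_derive_id | reflexivity].
  - cbn. unfold mult; cbn. ring.
Qed.

Lemma mvt_is_derive (f df : R -> R) c d :
  c < d -> (forall t, c <= t <= d -> is_derive f t (df t)) ->
  exists z, c < z < d /\ f d - f c = df z * (d - c).
Proof.
  intros Hcd Hf. destruct (MVT_cor2 f df c d Hcd) as [z [Hz Hz']].
  - intros t Ht. apply is_derive_Reals, Hf, Ht.
  - now exists z.
Qed.

Lemma derive_zero_const (f : R -> R) c d :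
  c <= d -> (forall t, c <= t <= d -> is_derive f t 0) -> f c = f d.
Proof.
  intros [Hcd | <-] Hf; [| reflexivity].
  destruct (mvt_is_derive f (fun _ => 0) c d Hcd Hf) as [z [_ Hz]]. lra.
Qed.

Lemma derive_nonpos_decr (f df : R -> R) c d :
  c <= d -> (forall t, c <= t <= d -> is_derive f t (df t)) ->
  (forall t, c < t < d -> df t <= 0) -> f d <= f c.
Proof.
  intros [Hcd | <-] Hf Hdf; [| lra].
  destruct (mvt_is_derive f df c d Hcd Hf) as [z [Hz Hz']].
  specialize (Hdf z Hz). nra.
Qed.

Lemma derive_neg_decr (f df : R -> R) c d :
  c < d -> (forall t, c <= t <= d -> is_derive f t (df t)) ->
  (forall t, c < t < d -> df t < 0) -> f d < f c.
Proof.
  intros Hcd Hf Hdf. destruct (mvt_is_derive f df c d Hcd Hf) as [z [Hz Hz']].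
  specialize (Hdf z Hz). nra.
Qed.

Lemma derive_pos_incr (f df : R -> R) c d :
  c < d -> (forall t, c <= t <= d -> is_derive f t (df t)) ->
  (forall t, c < t < d -> 0 < df t) -> f c < f d.
Proof.
  intros Hcd Hf Hdf. destruct (mvt_is_derive f df c d Hcd Hf) as [z [Hz Hz']].
  specialize (Hdf z Hz). nra.
Qed.

(** * Plane trigonometry *)

Lemma unit_vector_angle c s :
  c ^ 2 + s ^ 2 = 1 -> exists om, - PI < om <= PI /\ cos om = c /\ sin om = s.
Proof.
  intros Hcs.
  assert (Hc : -1 <= c <= 1) by (split; nra).
  destruct (Rle_or_lt 0 s) as [Hs | Hs].
  - exists (acos c). pose proof (acos_bound c). pose proof PI_RGT_0.
    split; [lra | split; [now apply cos_acos |]].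
    rewrite sin_acos by exact Hc. unfold Rsqr.
    replace (1 - c * c) with (s * s) by lra. now apply sqrt_square.
  - assert (Hc' : -1 < c < 1) by (split; nra).
    exists (- acos c). pose proof (acos_bound_lt c Hc').
    split; [lra | split; [rewrite cos_neg; now apply cos_acos |]].
    rewrite sin_neg, sin_acos by exact Hc. unfold Rsqr.
    replace (1 - c * c) with (- s * - s) by lra. rewrite sqrt_square; lra.
Qed.

Lemma circle_half_angle r u w :
  0 < r -> u ^ 2 + w ^ 2 = r ^ 2 ->
  exists th, 0 <= th <= PI /\ u = r * sin (2 * th) /\ w = - r * cos (2 * th).
Proof.
  intros Hr Huw.
  destruct (unit_vector_angle (u / r) (w / r)) as [om [Hom [Hc Hs]]].
  { field_simplify; [rewrite Huw; field |]; lra. }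
  assert (Hsin : forall th, 2 * th = om + PI / 2 \/ 2 * th = om + PI / 2 + 2 * PI ->
            u = r * sin (2 * th) /\ w = - r * cos (2 * th)).
  { intros th [-> | ->];
      rewrite ?sin_plus, ?cos_plus, ?sin_2PI, ?cos_2PI, ?sin_PI2, ?cos_PI2, Hc, Hs;
      split; field; lra. }
  pose proof PI_RGT_0.
  destruct (Rle_or_lt (- (PI / 2)) om).
  - exists (om / 2 + PI / 4). split; [lra |]. apply Hsin. left. field.
  - exists (om / 2 + PI / 4 + PI). split; [lra |]. apply Hsin. right. field.
Qed.

Lemma Rmult_pos_factors a b : 0 <= a -> 0 < a * b -> 0 < a /\ 0 < b.
Proof.
  intros Ha Hab. destruct Ha as [Ha | <-]; [split; [exact Ha | nra] | lra].
Qed.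

Lemma Rmult_pos_common_factor x y m : 0 < x * m -> 0 < y * m -> 0 < x * y.
Proof.
  intros Hx Hy.
  assert (Hm : 0 < m * m) by (destruct (Rtotal_order m 0) as [h | [-> | h]]; nra).
  assert (Hxy : 0 < (x * y) * (m * m))
    by (replace ((x * y) * (m * m)) with ((x * m) * (y * m)) by ring; now apply Rmult_lt_0_compat).
  nra.
Qed.

Lemma flat_half_angle_bound thi thj phi :
  0 <= thi <= PI -> 0 <= thj <= PI -> 0 <= phi <= PI ->
  sin thj ^ 2 < sin thi * sin (thi - phi) ->
  sin thi ^ 2 < sin thj * sin (thj + phi) ->
  0 < thj < PI / 2.
Proof.
  intros Hi Hj Hphi HA HB.
  pose proof PI_RGT_0.
  assert (Si : 0 <= sin thi) by (apply sin_ge_0; lra).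
  assert (Sj : 0 <= sin thj) by (apply sin_ge_0; lra).
  assert (Sphi : 0 <= sin phi) by (apply sin_ge_0; lra).
  assert (Si' : 0 < sin thi /\ 0 < sin (thi - phi)).
  { apply Rmult_pos_factors; [exact Si |]. pose proof (pow2_ge_0 (sin thj)); lra. }
  assert (Sj' : 0 < sin thj /\ 0 < sin (thj + phi)).
  { apply Rmult_pos_factors; [exact Sj |]. pose proof (pow2_ge_0 (sin thi)); lra. }
  assert (Hthi : 0 < thi - phi).
  { destruct (Rlt_or_le 0 (thi - phi)) as [h | h]; [exact h |].
    enough (sin (thi - phi) <= 0) by lra.
    rewrite <- (Ropp_involutive (thi - phi)), sin_neg.
    enough (0 <= sin (- (thi - phi))) by lra. apply sin_ge_0; lra. }
  assert (Hprod : sin thi * sin thj < sin (thi - phi) * sin (thj + phi)).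
  { destruct Si' as [Si1 Si2], Sj' as [Sj1 Sj2].
    assert (Hsq : (sin thi * sin thj) ^ 2
                  < (sin thi * sin thj) * (sin (thi - phi) * sin (thj + phi))).
    { replace ((sin thi * sin thj) ^ 2) with (sin thi ^ 2 * sin thj ^ 2) by ring.
      apply Rle_lt_trans with (sin thj * sin (thj + phi) * sin thj ^ 2); [nra |].
      replace ((sin thi * sin thj) * (sin (thi - phi) * sin (thj + phi)))
        with (sin thj * sin (thj + phi) * (sin thi * sin (thi - phi))) by ring.
      apply Rmult_lt_compat_l; nra. }
    nra. }
  assert (Hid : sin (thi - phi) * sin (thj + phi) - sin thi * sin thj
                = sin phi * sin (thi - phi - thj)).
  { rewrite !sin_minus, sin_plus, cos_minus.
    pose proof (sin2_cos2 phi) as Hp. unfold Rsqr in Hp.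
    transitivity (sin phi * ((sin thi * cos phi - cos thi * sin phi) * cos thj
                  - (cos thi * cos phi + sin thi * sin phi) * sin thj)
                  + sin thi * sin thj * (sin phi * sin phi + cos phi * cos phi - 1)); [ring |].
    rewrite Hp. ring. }
  assert (Hgap : thj < thi - phi).
  { assert (0 < sin (thi - phi - thj)) by nra.
    destruct (Rlt_or_le thj (thi - phi)) as [h | h]; [exact h |].
    enough (sin (thi - phi - thj) <= 0) by lra.
    rewrite <- (Ropp_involutive (thi - phi - thj)), sin_neg.
    enough (0 <= sin (- (thi - phi - thj))) by lra. apply sin_ge_0; lra. }
  split.
  - destruct (Rlt_or_le 0 thj) as [h | h]; [exact h |].
    assert (thj = 0) by lra. subst. rewrite sin_0 in Sj'. lra.
  - destruct (Rlt_or_le thj (PI / 2)) as [h | h]; [exact h | exfalso].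
    assert (thi < PI).
    { destruct (Rlt_or_le thi PI) as [h' | h']; [exact h' |].
      assert (thi = PI) by lra. subst. rewrite sin_PI in Si'. lra. }
    assert (sin thi < sin thj) by (apply sin_decreasing_1; lra).
    assert (sin (thi - phi) < sin thj) by (apply sin_decreasing_1; lra).
    nra.
Qed.

(* Gi, Hi (resp. Gj, Hj) are the tangential and normal coordinates of a point of the
   circle of radius r centred at the origin, in the frame of an arc at ti (resp. tj), and
   phi is the angle the tangent turns from ti to tj.  The two strict inequalities say
   that the chord of the parallel curve g + r n lies between the normals at its ends. *)
Lemma flat_chord_tangent_signs r Gi Hi Gj Hj phi :
  0 < r -> Gi ^ 2 + Hi ^ 2 = r ^ 2 -> Gj ^ 2 + Hj ^ 2 = r ^ 2 -> 0 <= phi <= PI ->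
  Hj + r + sin phi * Gi - cos phi * (Hi + r) < 0 ->
  Hi + r < sin phi * Gj + cos phi * (Hj + r) ->
  Gi < 0 < Gj.
Proof.
  intros Hr Ci Cj Hphi HA HB.
  (* Then (G, H + r) = 2 r sin th (cos th, sin th). *)
  destruct (circle_half_angle r Gi Hi Hr Ci) as [thi [Hthi [-> ->]]].
  destruct (circle_half_angle r Gj Hj Hr Cj) as [thj [Hthj [-> ->]]].
  assert (HA' : sin thj ^ 2 < sin thi * sin (thi - phi)).
  { rewrite sin_minus. apply (Rmult_lt_reg_l (2 * r)); [lra |].
    rewrite !sin_2a, !cos_2a_sin in HA. nra. }
  assert (HB' : sin thi ^ 2 < sin thj * sin (thj + phi)).
  { rewrite sin_plus. apply (Rmult_lt_reg_l (2 * r)); [lra |].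
    rewrite !sin_2a, !cos_2a_sin in HB. nra. }
  pose proof PI_RGT_0.
  assert (Hj' := flat_half_angle_bound thi thj phi Hthi Hthj Hphi HA' HB').
  assert (Hi' : 0 < PI - thi < PI / 2).
  { apply (flat_half_angle_bound (PI - thj) (PI - thi) phi); try lra;
      rewrite ?sin_PI_x; [replace (PI - thj - phi) with (PI - (thj + phi)) by ring
                         | replace (PI - thi + phi) with (PI - (thi - phi)) by ring];
      rewrite sin_PI_x; assumption. }
  split.
  - enough (sin (2 * thi) < 0) by nra. apply sin_lt_0; lra.
  - enough (0 < sin (2 * thj)) by nra. apply sin_gt_0; lra.
Qed.

Lemma circle_chord_cross_sign r rr px py qx qy nx ny :
  0 < rr < r -> px ^ 2 + py ^ 2 = r ^ 2 -> qx ^ 2 + qy ^ 2 = r ^ 2 ->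
  nx ^ 2 + ny ^ 2 = 1 -> ~ (qx = px /\ qy = py) ->
  (qx - px) ^ 2 + (qy - py) ^ 2 <= 2 * rr * ((qx - px) * nx + (qy - py) * ny) ->
  0 < (px * qy - py * qx) * (px * ny - py * nx).
Proof.
  intros Hrr Hp Hq Hn Hpq Hdisk.
  set (d2 := (qx - px) ^ 2 + (qy - py) ^ 2) in *.
  set (dn := (qx - px) * nx + (qy - py) * ny) in *.
  assert (Hd2 : 0 < d2).
  { destruct (Rlt_or_le 0 d2) as [h | h]; [exact h | exfalso; apply Hpq].
    unfold d2 in h. pose proof (pow2_ge_0 (qx - px)). pose proof (pow2_ge_0 (qy - py)).
    split; nra. }
  assert (Hdn : 0 < dn) by nra.
  (* For u = p + r n, Lagrange's identity gives
     (p x q) (p x u) = |p|^2 <q - p, u> + <p, u> |q - p|^2 / 2, with both terms positive. *)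
  set (ux := px + r * nx). set (uy := py + r * ny).
  assert (Hqu : 0 < (qx - px) * ux + (qy - py) * uy).
  { assert (E : (qx - px) * ux + (qy - py) * uy
                = - d2 / 2 + r * dn + ((qx ^ 2 + qy ^ 2) - (px ^ 2 + py ^ 2)) / 2)
      by (unfold d2, dn, ux, uy; field).
    rewrite E, Hp, Hq. nra. }
  assert (Hpu : 0 <= px * ux + py * uy).
  { assert (Hcs : (px * nx + py * ny) ^ 2 <= r ^ 2).
    { replace (r ^ 2) with ((px ^ 2 + py ^ 2) * (nx ^ 2 + ny ^ 2)) by (rewrite Hp, Hn; ring).
      pose proof (pow2_ge_0 (px * ny - py * nx)). nra. }
    unfold ux, uy. nra. }
  assert (Hid : (px * qy - py * qx) * (px * uy - py * ux)
                = r ^ 2 * ((qx - px) * ux + (qy - py) * uy) + (px * ux + py * uy) * (d2 / 2)).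
  { assert (E : (px * qy - py * qx) * (px * uy - py * ux)
                 = (px ^ 2 + py ^ 2) * ((qx - px) * ux + (qy - py) * uy)
                   + (px * ux + py * uy) * (d2 / 2)
                   + (px * ux + py * uy) * ((px ^ 2 + py ^ 2) - (qx ^ 2 + qy ^ 2)) / 2)
      by (unfold d2; field).
    rewrite E, Hq, Hp. field. }
  replace (px * uy - py * ux) with (r * (px * ny - py * nx)) in Hid by (unfold ux, uy; ring).
  assert (0 < r * ((px * qy - py * qx) * (px * ny - py * nx))).
  { replace (r * ((px * qy - py * qx) * (px * ny - py * nx)))
      with ((px * qy - py * qx) * (r * (px * ny - py * nx))) by ring.
    rewrite Hid. pose proof (pow2_gt_0 r). nra. }
  nra.
Qed.

Lemma circle_cross_signs_absurd c12 c13 c23 m1 m2 m3 :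
  0 < c12 * m1 -> 0 < c13 * m1 -> 0 < - c12 * m2 -> 0 < c23 * m2 ->
  0 < - c13 * m3 -> 0 < - c23 * m3 -> False.
Proof.
  intros H12 H13 H21 H23 H31 H32.
  pose proof (Rmult_pos_common_factor _ _ _ H12 H13).
  pose proof (Rmult_pos_common_factor _ _ _ H21 H23).
  pose proof (Rmult_pos_common_factor _ _ _ H31 H32).
  assert (0 < c12 * c23) by (apply (Rmult_pos_common_factor _ _ c13); lra).
  lra.
Qed.

(** * Convex arcs *)

(* Position (g1, g2), speed v, unit tangent (e1, e2) with tangent angle th turning at
   rate k; the unit normal is (- e2, e1). *)
Set Implicit Arguments.
Record convex_arc (a b : R) (g1 g2 e1 e2 v k th : R -> R) : Prop := {
  arc_dg1 : forall t, a <= t <= b -> is_derive g1 t (v t * e1 t);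
  arc_dg2 : forall t, a <= t <= b -> is_derive g2 t (v t * e2 t);
  arc_de1 : forall t, a <= t <= b -> is_derive e1 t (- k t * e2 t);
  arc_de2 : forall t, a <= t <= b -> is_derive e2 t (k t * e1 t);
  arc_dth : forall t, a <= t <= b -> is_derive th t (k t);
  arc_unit : forall t, a <= t <= b -> e1 t ^ 2 + e2 t ^ 2 = 1;
  arc_speed_pos : forall t, a <= t <= b -> 0 < v t;
  arc_rate_pos : forall t, a <= t <= b -> 0 < k t }.
Unset Implicit Arguments.

Section ConvexArc.

Context {a b : R} {g1 g2 e1 e2 v k th : R -> R}.
Hypothesis A : convex_arc a b g1 g2 e1 e2 v k th.

Lemma arc_rotation s t : a <= s <= b -> a <= t <= b ->
  e1 t = cos (th t - th s) * e1 s - sin (th t - th s) * e2 s /\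
  e2 t = cos (th t - th s) * e2 s + sin (th t - th s) * e1 s.
Proof.
  intros Hs Ht.
  set (rot1 := fun u => cos (th u - th s) * e1 s - sin (th u - th s) * e2 s).
  set (rot2 := fun u => cos (th u - th s) * e2 s + sin (th u - th s) * e1 s).
  set (err := fun u => (e1 u - rot1 u) ^ 2 + (e2 u - rot2 u) ^ 2).
  assert (Herr : forall u, a <= u <= b -> is_derive err u 0).
  { intros u Hu.
    assert (Hphi : is_derive (fun w => th w - th s) u (k u - 0))
      by (apply is_derive_Rminus; [apply (arc_dth A Hu) | apply is_derive_Rconst]).
    eapply is_derive_eq.
    - apply is_derive_Rplus; apply (is_derive_pow (fun w => _) 2 u).
      + apply is_derive_Rminus; [apply (arc_de1 A Hu) |]. apply is_derive_Rminus.
        * apply is_derive_Rmult; [apply is_derive_cos_comp, Hphi | apply is_derive_Rconst].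
        * apply is_derive_Rmult; [apply is_derive_sin_comp, Hphi | apply is_derive_Rconst].
      + apply is_derive_Rminus; [apply (arc_de2 A Hu) |]. apply is_derive_Rplus.
        * apply is_derive_Rmult; [apply is_derive_cos_comp, Hphi | apply is_derive_Rconst].
        * apply is_derive_Rmult; [apply is_derive_sin_comp, Hphi | apply is_derive_Rconst].
    - unfold rot1, rot2. cbn. ring. }
  assert (Hs0 : err s = 0) by (unfold err, rot1, rot2; rewrite Rminus_diag, cos_0, sin_0; ring).
  assert (Ht0 : err t = 0).
  { rewrite <- Hs0. destruct (Rle_or_lt s t).
    - symmetry. apply derive_zero_const; [lra |]. intros u Hu. apply Herr. lra.
    - apply derive_zero_const; [lra |]. intros u Hu. apply Herr. lra. }
  unfold err, rot1, rot2 in Ht0.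
  set (d1 := e1 t - _) in Ht0. set (d2 := e2 t - _) in Ht0.
  assert (d1 = 0 /\ d2 = 0) as [H1 H2].
  { pose proof (pow2_ge_0 d1). pose proof (pow2_ge_0 d2). split; nra. }
  unfold d1, d2 in H1, H2. split; lra.
Qed.

Lemma arc_tangent_dot s t om : a <= s <= b -> a <= t <= b ->
  e1 t * (cos om * e1 s - sin om * e2 s) + e2 t * (cos om * e2 s + sin om * e1 s)
  = cos (th t - th s - om).
Proof.
  intros Hs Ht. destruct (arc_rotation s t Hs Ht) as [-> ->]. rewrite (cos_minus (th t - th s) om).
  transitivity ((cos (th t - th s) * cos om + sin (th t - th s) * sin om) * (e1 s ^ 2 + e2 s ^ 2));
    [ring | rewrite (arc_unit A Hs); ring].
Qed.

Lemma arc_normal_dot s t om : a <= s <= b -> a <= t <= b ->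
  - e2 t * (cos om * e1 s - sin om * e2 s) + e1 t * (cos om * e2 s + sin om * e1 s)
  = - sin (th t - th s - om).
Proof.
  intros Hs Ht. destruct (arc_rotation s t Hs Ht) as [-> ->]. rewrite (sin_minus (th t - th s) om).
  transitivity (- (sin (th t - th s) * cos om - cos (th t - th s) * sin om)
                * (e1 s ^ 2 + e2 s ^ 2));
    [ring | rewrite (arc_unit A Hs); ring].
Qed.

Lemma arc_th_lt s t : a <= s -> s < t -> t <= b -> th s < th t.
Proof.
  intros Hs Hst Ht. apply (derive_pos_incr th k s t Hst).
  - intros u Hu. apply (arc_dth A). lra.
  - intros u Hu. apply (arc_rate_pos A). lra.
Qed.

Lemma arc_th_le s t : a <= s -> s <= t -> t <= b -> th s <= th t.
Proof.
  intros Hs [Hst | <-] Ht; [apply Rlt_le, arc_th_lt |]; lra.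
Qed.

Lemma arc_th_ivt c d y : a <= c -> c <= d -> d <= b -> th c <= y <= th d ->
  exists t, c <= t <= d /\ th t = y.
Proof.
  intros Hc Hcd Hd Hy.
  destruct (Req_dec (th c) y) as [<- | Hyc]; [exists c; split; [lra | reflexivity] |].
  destruct (Req_dec (th d) y) as [<- | Hyd]; [exists d; split; [lra | reflexivity] |].
  destruct (Ranalysis5.IVT_interv (fun t => th t - y) c d) as [z [Hz Hz']]; try lra.
  - intros t Ht. apply continuity_pt_minus; [| apply continuity_pt_const; now intros ? ?].
    apply continuity_pt_filterlim, (ex_derive_continuous th).
    exists (k t). apply (arc_dth A). lra.
  - destruct Hcd as [Hcd | <-]; [exact Hcd | lra].
  - exists z. split; [exact Hz | lra].
Qed.

Lemma arc_chord_between_normals (h1 h2 w : R -> R) ti tj :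
  (forall t, a <= t <= b -> is_derive h1 t (w t * e1 t)) ->
  (forall t, a <= t <= b -> is_derive h2 t (w t * e2 t)) ->
  (forall t, a <= t <= b -> 0 < w t) ->
  a <= ti -> ti < tj -> tj <= b -> th tj - th ti <= PI ->
  (h1 tj - h1 ti) * - e2 tj + (h2 tj - h2 ti) * e1 tj < 0 <
  (h1 tj - h1 ti) * - e2 ti + (h2 tj - h2 ti) * e1 ti.
Proof.
  intros Hh1 Hh2 Hw Ha Hij Hb HPI.
  assert (Hd : forall s t, a <= s <= b -> a <= t <= b ->
    is_derive (fun u => h1 u * - e2 s + h2 u * e1 s) t (w t * sin (th t - th s))).
  { intros s t Hs Ht. eapply is_derive_eq.
    - apply is_derive_Rplus; apply is_derive_Rmult;
        [apply Hh1, Ht | apply is_derive_Rconst | apply Hh2, Ht | apply is_derive_Rconst].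
    - pose proof (arc_tangent_dot s t (PI / 2) Hs Ht) as E.
      replace (cos (th t - th s - PI / 2)) with (sin (th t - th s)) in E
        by (rewrite (cos_minus (th t - th s)), cos_PI2, sin_PI2; ring).
      rewrite cos_PI2, sin_PI2 in E. cbn. rewrite <- E. ring. }
  assert (Hrange : forall t, ti < t < tj -> 0 < th t - th ti < PI /\ - PI < th t - th tj < 0).
  { intros t Ht. pose proof (arc_th_lt ti t Ha (proj1 Ht) ltac:(lra)).
    pose proof (arc_th_lt t tj ltac:(lra) (proj2 Ht) Hb). lra. }
  split.
  - enough (Hlt : h1 tj * - e2 tj + h2 tj * e1 tj < h1 ti * - e2 tj + h2 ti * e1 tj) by lra.
    apply (derive_neg_decr (fun u => h1 u * - e2 tj + h2 u * e1 tj)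
             (fun t => w t * sin (th t - th tj)) ti tj Hij).
    + intros t Ht. apply Hd; lra.
    + intros t Ht. destruct (Hrange t Ht) as [_ Hr].
      pose proof (Hw t ltac:(lra)). pose proof (sin_lt_0_var _ (proj1 Hr) (proj2 Hr)). nra.
  - enough (Hlt : h1 ti * - e2 ti + h2 ti * e1 ti < h1 tj * - e2 ti + h2 tj * e1 ti) by lra.
    apply (derive_pos_incr (fun u => h1 u * - e2 ti + h2 u * e1 ti)
             (fun t => w t * sin (th t - th ti)) ti tj Hij).
    + intros t Ht. apply Hd; lra.
    + intros t Ht. destruct (Hrange t Ht) as [Hr _].
      pose proof (Hw t ltac:(lra)). pose proof (sin_gt_0 _ (proj1 Hr) (proj2 Hr)). nra.
Qed.

(* The parallel curve g + r n has velocity (v - r k) e. *)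
Lemma arc_flat_tangent_signs r ti tj :
  0 < r -> (forall t, a <= t <= b -> r * k t < v t) ->
  a <= ti -> ti < tj -> tj <= b -> th tj - th ti <= PI ->
  g1 ti ^ 2 + g2 ti ^ 2 = r ^ 2 -> g1 tj ^ 2 + g2 tj ^ 2 = r ^ 2 ->
  g1 ti * e1 ti + g2 ti * e2 ti < 0 < g1 tj * e1 tj + g2 tj * e2 tj.
Proof.
  intros Hr Hflat Ha Hij Hb HPI Ci Cj.
  assert (Hi : a <= ti <= b) by lra. assert (Hj : a <= tj <= b) by lra.
  destruct (arc_chord_between_normals (fun t => g1 t - r * e2 t) (fun t => g2 t + r * e1 t)
              (fun t => v t - r * k t) ti tj) as [HA HB]; try assumption.
  - intros t Ht. eapply is_derive_eq.
    + apply is_derive_Rminus; [apply (arc_dg1 A Ht) |]. apply is_derive_scal, (arc_de2 A Ht).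
    + cbn. ring.
  - intros t Ht. eapply is_derive_eq.
    + apply is_derive_Rplus; [apply (arc_dg2 A Ht) |]. apply is_derive_scal, (arc_de1 A Ht).
    + cbn. ring.
  - intros t Ht. pose proof (Hflat t Ht). lra.
  - pose proof (arc_th_lt ti tj Ha Hij Hb).
    pose proof (arc_unit A Hi) as Ui. pose proof (arc_unit A Hj) as Uj.
    pose proof (sin2_cos2 (th tj - th ti)) as Hsc. unfold Rsqr in Hsc.
    destruct (arc_rotation ti tj Hi Hj) as [R1 R2].
    set (s := sin (th tj - th ti)) in *. set (c := cos (th tj - th ti)) in *.
    apply (flat_chord_tangent_signs r _ (g1 ti * - e2 ti + g2 ti * e1 ti)
             _ (g1 tj * - e2 tj + g2 tj * e1 tj) (th tj - th ti) Hr).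
    + transitivity ((g1 ti ^ 2 + g2 ti ^ 2) * (e1 ti ^ 2 + e2 ti ^ 2));
        [ring | rewrite Ci, Ui; ring].
    + transitivity ((g1 tj ^ 2 + g2 tj ^ 2) * (e1 tj ^ 2 + e2 tj ^ 2));
        [ring | rewrite Cj, Uj; ring].
    + lra.
    + assert (E : (g1 tj - r * e2 tj - (g1 ti - r * e2 ti)) * - e2 tj
                  + (g2 tj + r * e1 tj - (g2 ti + r * e1 ti)) * e1 tj
                  - ((g1 tj * - e2 tj + g2 tj * e1 tj) + r + s * (g1 ti * e1 ti + g2 ti * e2 ti)
                     - c * ((g1 ti * - e2 ti + g2 ti * e1 ti) + r))
                  = r * ((s * s + c * c) * (e1 ti ^ 2 + e2 ti ^ 2) - 1)
                    - r * c * (e1 ti ^ 2 + e2 ti ^ 2 - 1))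
        by (rewrite R1, R2; ring).
      rewrite Ui, Hsc in E. fold s c. lra.
    + assert (E : (g1 tj - r * e2 tj - (g1 ti - r * e2 ti)) * - e2 ti
                  + (g2 tj + r * e1 tj - (g2 ti + r * e1 ti)) * e1 ti
                  - (s * (g1 tj * e1 tj + g2 tj * e2 tj)
                     + c * ((g1 tj * - e2 tj + g2 tj * e1 tj) + r)
                     - ((g1 ti * - e2 ti + g2 ti * e1 ti) + r))
                  = (1 - (s * s + c * c)) * (- g1 tj * e2 ti + g2 tj * e1 ti)
                    + r * c * (e1 ti ^ 2 + e2 ti ^ 2 - 1) - r * (e1 ti ^ 2 + e2 ti ^ 2 - 1))
        by (rewrite R1, R2; ring).
      rewrite Ui, Hsc in E. fold s c. lra.
Qed.

Lemma arc_flat_no_three_circle_points r s1 s2 s3 :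
  0 < r -> (forall t, a <= t <= b -> r * k t < v t) ->
  a <= s1 -> s1 < s2 -> s2 < s3 -> s3 <= b -> th s3 - th s1 <= PI ->
  g1 s1 ^ 2 + g2 s1 ^ 2 = r ^ 2 -> g1 s2 ^ 2 + g2 s2 ^ 2 = r ^ 2 ->
  g1 s3 ^ 2 + g2 s3 ^ 2 = r ^ 2 -> False.
Proof.
  intros Hr Hflat H1 H12 H23 H3 HPI Hc1 Hc2 Hc3.
  pose proof (arc_th_le s1 s2 H1 (Rlt_le _ _ H12) ltac:(lra)).
  pose proof (arc_th_le s2 s3 ltac:(lra) (Rlt_le _ _ H23) H3).
  destruct (arc_flat_tangent_signs r s1 s2) as [_ Hexit]; try assumption; try lra.
  destruct (arc_flat_tangent_signs r s2 s3) as [Henter _]; try assumption; try lra.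
Qed.

Let dir_proj s om t :=
  g1 t * (cos om * e1 s - sin om * e2 s) + g2 t * (cos om * e2 s + sin om * e1 s).

Lemma arc_dir_proj_derive s om t : a <= s <= b -> a <= t <= b ->
  is_derive (dir_proj s om) t (v t * cos (th t - th s - om)).
Proof.
  intros Hs Ht. unfold dir_proj. eapply is_derive_eq.
  - apply is_derive_Rplus; apply is_derive_Rmult;
      [apply (arc_dg1 A Ht) | apply is_derive_Rconst
      | apply (arc_dg2 A Ht) | apply is_derive_Rconst].
  - cbn. rewrite <- (arc_tangent_dot s t om Hs Ht). ring.
Qed.

Lemma arc_dir_proj_increment_le rr s om p q :
  0 < rr -> (forall t, a <= t <= b -> v t <= rr * k t) ->
  a <= s <= b -> a <= p -> p <= q -> q <= b ->
  (forall t, p < t < q -> 0 <= cos (th t - th s - om)) ->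
  dir_proj s om q - dir_proj s om p <= rr * (sin (th q - th s - om) - sin (th p - th s - om)).
Proof.
  intros Hrr Hcurvy Hs Hp Hpq Hq Hcos.
  set (nproj := fun t =>
         - e2 t * (cos om * e1 s - sin om * e2 s) + e1 t * (cos om * e2 s + sin om * e1 s)).
  assert (Hn : forall t, a <= t <= b -> nproj t = - sin (th t - th s - om)).
  { intros t Ht. apply (arc_normal_dot s t om Hs Ht). }
  enough (Hdec : dir_proj s om q + rr * nproj q <= dir_proj s om p + rr * nproj p).
  { rewrite !Hn in Hdec by lra. lra. }
  apply (derive_nonpos_decr (fun t => dir_proj s om t + rr * nproj t)
           (fun t => (v t - rr * k t) * cos (th t - th s - om)) p q Hpq).
  - intros t Ht. assert (Ht' : a <= t <= b) by lra. eapply is_derive_eq.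
    + apply is_derive_Rplus; [apply (arc_dir_proj_derive s om t Hs Ht') |].
      apply is_derive_scal. unfold nproj. cbv beta.
      apply is_derive_Rplus; apply is_derive_Rmult.
      * apply is_derive_Ropp, (arc_de2 A Ht').
      * apply is_derive_Rconst.
      * apply (arc_de1 A Ht').
      * apply is_derive_Rconst.
    + cbn. rewrite <- (arc_tangent_dot s t om Hs Ht'). ring.
  - intros t Ht. pose proof (Hcurvy t ltac:(lra)). pose proof (Hcos t Ht). nra.
Qed.

Lemma arc_dir_proj_nonincr s om p q :
  a <= s <= b -> a <= p -> p <= q -> q <= b ->
  (forall t, p < t < q -> cos (th t - th s - om) <= 0) ->
  dir_proj s om q <= dir_proj s om p.
Proof.
  intros Hs Hp Hpq Hq Hcos.
  apply (derive_nonpos_decr _ (fun t => v t * cos (th t - th s - om)) p q Hpq).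
  - intros t Ht. apply arc_dir_proj_derive; lra.
  - intros t Ht. pose proof (arc_speed_pos A (t := t) ltac:(lra)). pose proof (Hcos t Ht). nra.
Qed.

(* rr (1 + sin om) is the support function of the disk of radius rr tangent to the arc at
   g ti, in the direction at angle om from e ti.  Cut [ti, tj] where cos (th - th ti - om)
   changes sign: where it is nonnegative the projection grows at most like that of the
   circle of radius rr, elsewhere it does not grow. *)
Lemma arc_support rr ti tj om :
  0 < rr -> (forall t, a <= t <= b -> v t <= rr * k t) ->
  a <= ti -> ti < tj -> tj <= b -> th tj - th ti <= PI -> - PI < om <= PI ->
  dir_proj ti om tj - dir_proj ti om ti <= rr * (1 + sin om).
Proof.
  intros Hrr Hcurvy Ha Hij Hb HPI Hom.
  set (psi t := th t - th ti - om). set (P := dir_proj ti om).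
  assert (Hrange : forall p q t, ti <= p -> p < t < q -> q <= tj -> psi p <= psi t <= psi q).
  { intros p q t Hp Ht Hq. unfold psi.
    pose proof (arc_th_le p t ltac:(lra) ltac:(lra) ltac:(lra)).
    pose proof (arc_th_le t q ltac:(lra) ltac:(lra) ltac:(lra)). lra. }
  assert (Hup : forall p q, ti <= p -> p <= q -> q <= tj ->
            (forall t, p < t < q -> 0 <= cos (psi t)) ->
            P q - P p <= rr * (sin (psi q) - sin (psi p))).
  { intros p q Hp Hpq Hq. apply (arc_dir_proj_increment_le rr ti om p q Hrr Hcurvy); lra. }
  assert (Hdown : forall p q, ti <= p -> p <= q -> q <= tj ->
            (forall t, p < t < q -> cos (psi t) <= 0) -> P q <= P p).
  { intros p q Hp Hpq Hq. apply arc_dir_proj_nonincr; lra. }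
  assert (Hstart : psi ti = - om) by (unfold psi; ring).
  assert (Hend : - om < psi tj <= PI - om)
    by (pose proof (arc_th_lt ti tj Ha Hij Hb); unfold psi; lra).
  assert (Hsplit : forall c, - om <= c <= psi tj -> exists ts, ti <= ts <= tj /\ psi ts = c).
  { intros c Hc.
    destruct (arc_th_ivt ti tj (th ti + om + c) Ha (Rlt_le _ _ Hij) Hb) as [ts [Hts Hth]];
      [unfold psi in Hc; lra |].
    exists ts. split; [exact Hts | unfold psi; lra]. }
  change (P tj - P ti <= rr * (1 + sin om)).
  pose proof PI_RGT_0. pose proof (SIN_bound om). pose proof (SIN_bound (psi tj)).
  assert (Hpos : 0 <= rr * (1 + sin om)) by (apply Rmult_le_pos; lra).
  destruct (Rle_or_lt om (PI / 2)) as [Hom1 | Hom1];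
    [destruct (Rle_or_lt (- (PI / 2)) om) as [Hom2 | Hom2] |].
  - destruct (Rle_or_lt (psi tj) (PI / 2)) as [Hc | Hc].
    + assert (Hinc : P tj - P ti <= rr * (sin (psi tj) - sin (psi ti))).
      { apply Hup; try lra. intros t Ht.
        pose proof (Hrange ti tj t (Rle_refl _) Ht (Rle_refl _)). apply cos_ge_0; lra. }
      rewrite Hstart, sin_neg in Hinc.
      enough (rr * (sin (psi tj) - - sin om) <= rr * (1 + sin om)) by lra.
      apply Rmult_le_compat_l; lra.
    + destruct (Hsplit (PI / 2)) as [ts [Hts Hts']]; [lra |].
      assert (Hinc : P ts - P ti <= rr * (sin (psi ts) - sin (psi ti))).
      { apply Hup; try lra. intros t Ht.
        pose proof (Hrange ti ts t (Rle_refl _) Ht (proj2 Hts)). apply cos_ge_0; lra. }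
      assert (Hdec : P tj <= P ts).
      { apply Hdown; try lra. intros t Ht.
        pose proof (Hrange ts tj t (proj1 Hts) Ht (Rle_refl _)). apply cos_le_0; lra. }
      rewrite Hts', Hstart, sin_PI2, sin_neg in Hinc. lra.
  - destruct (Rle_or_lt (psi tj) (3 * (PI / 2))) as [Hc | Hc].
    + enough (P tj <= P ti) by lra.
      apply Hdown; try lra. intros t Ht.
      pose proof (Hrange ti tj t (Rle_refl _) Ht (Rle_refl _)). apply cos_le_0; lra.
    + destruct (Hsplit (3 * (PI / 2))) as [ts [Hts Hts']]; [lra |].
      assert (Hdec : P ts <= P ti).
      { apply Hdown; try lra. intros t Ht.
        pose proof (Hrange ti ts t (Rle_refl _) Ht (proj2 Hts)). apply cos_le_0; lra. }
      assert (Hinc : P tj - P ts <= rr * (sin (psi tj) - sin (psi ts))).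
      { apply Hup; try lra. intros t Ht.
        pose proof (Hrange ts tj t (proj1 Hts) Ht (Rle_refl _)). apply cos_ge_0_3PI2; lra. }
      assert (Hsin : sin (psi tj) <= sin om).
      { replace (sin (psi tj)) with (sin (psi tj - 2 * PI))
          by (rewrite (sin_minus _ (2 * PI)), sin_2PI, cos_2PI; ring).
        replace (sin om) with (sin (- PI - om))
          by (rewrite (sin_minus (- PI) om), sin_neg, cos_neg, sin_PI, cos_PI; ring).
        apply sin_incr_1; lra. }
      rewrite Hts', sin_3PI2 in Hinc.
      enough (rr * (sin (psi tj) - -1) <= rr * (1 + sin om)) by lra.
      apply Rmult_le_compat_l; lra.
  - destruct (Rle_or_lt (psi tj) (- (PI / 2))) as [Hc | Hc].
    + enough (P tj <= P ti) by lra.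
      apply Hdown; try lra. intros t Ht.
      pose proof (Hrange ti tj t (Rle_refl _) Ht (Rle_refl _)).
      rewrite <- cos_neg. apply cos_le_0; lra.
    + destruct (Hsplit (- (PI / 2))) as [ts [Hts Hts']]; [lra |].
      assert (Hdec : P ts <= P ti).
      { apply Hdown; try lra. intros t Ht.
        pose proof (Hrange ti ts t (Rle_refl _) Ht (proj2 Hts)).
        rewrite <- cos_neg. apply cos_le_0; lra. }
      assert (Hinc : P tj - P ts <= rr * (sin (psi tj) - sin (psi ts))).
      { apply Hup; try lra. intros t Ht.
        pose proof (Hrange ts tj t (proj1 Hts) Ht (Rle_refl _)). apply cos_ge_0; lra. }
      assert (Hsin : sin (psi tj) <= sin om)
        by (rewrite <- (sin_PI_x om); apply sin_incr_1; lra).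
      rewrite Hts', sin_neg, sin_PI2 in Hinc.
      enough (rr * (sin (psi tj) - -1) <= rr * (1 + sin om)) by lra.
      apply Rmult_le_compat_l; lra.
Qed.

Lemma arc_chord_in_disk rr ti tj :
  0 < rr -> (forall t, a <= t <= b -> v t <= rr * k t) ->
  a <= ti -> ti < tj -> tj <= b -> th tj - th ti <= PI ->
  (g1 tj - g1 ti) ^ 2 + (g2 tj - g2 ti) ^ 2
  <= 2 * rr * ((g1 tj - g1 ti) * - e2 ti + (g2 tj - g2 ti) * e1 ti).
Proof.
  intros Hrr Hcurvy Ha Hij Hb HPI.
  pose proof (arc_unit A (t := ti) ltac:(lra)) as U.
  set (X := g1 tj - g1 ti). set (Y := g2 tj - g2 ti).
  set (Xf := X * e1 ti + Y * e2 ti). set (Yf := X * - e2 ti + Y * e1 ti).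
  assert (HN : X ^ 2 + Y ^ 2 = Xf ^ 2 + Yf ^ 2).
  { transitivity ((X ^ 2 + Y ^ 2) * (e1 ti ^ 2 + e2 ti ^ 2));
      [rewrite U; ring | unfold Xf, Yf; ring]. }
  rewrite HN. fold Yf.
  destruct (Rle_or_lt (Xf ^ 2 + Yf ^ 2) (2 * rr * Yf)) as [Hin | Hout]; [exact Hin | exfalso].
  set (L := sqrt (Xf ^ 2 + (Yf - rr) ^ 2)).
  assert (HL2 : L ^ 2 = Xf ^ 2 + (Yf - rr) ^ 2)
    by (unfold L; apply pow2_sqrt; nra).
  assert (HL : rr < L).
  { destruct (Rlt_or_le rr L) as [h | h]; [exact h |].
    pose proof (sqrt_pos (Xf ^ 2 + (Yf - rr) ^ 2)) as HL0. fold L in HL0. nra. }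
  (* Use the support inequality in the direction from the centre of the disk to g tj. *)
  destruct (unit_vector_angle (Xf / L) ((Yf - rr) / L)) as [om [Hom [Hc Hs]]].
  { replace ((Xf / L) ^ 2 + ((Yf - rr) / L) ^ 2) with ((Xf ^ 2 + (Yf - rr) ^ 2) / L ^ 2)
      by (field; lra).
    rewrite <- HL2. field. lra. }
  pose proof (arc_support rr ti tj om Hrr Hcurvy Ha Hij Hb HPI Hom) as Hsup.
  assert (Hproj : dir_proj ti om tj - dir_proj ti om ti = (Xf ^ 2 + (Yf - rr) * Yf) / L)
    by (unfold dir_proj; rewrite Hc, Hs; unfold Xf, Yf, X, Y; field; lra).
  rewrite Hproj, Hs in Hsup.
  assert (Hsup' : Xf ^ 2 + (Yf - rr) * Yf <= rr * (L + (Yf - rr))).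
  { apply (Rmult_le_reg_r (/ L)); [apply Rinv_0_lt_compat; lra |].
    replace (rr * (L + (Yf - rr)) * / L) with (rr * (1 + (Yf - rr) / L)) by (field; lra).
    exact Hsup. }
  nra.
Qed.

End ConvexArc.

(* Reversing the parameter alone would make k negative; the reflection restores it. *)
Lemma convex_arc_reverse {a b g1 g2 e1 e2 v k th} :
  convex_arc a b g1 g2 e1 e2 v k th ->
  convex_arc (- b) (- a) (fun t => g1 (- t)) (fun t => - g2 (- t)) (fun t => - e1 (- t))
    (fun t => e2 (- t)) (fun t => v (- t)) (fun t => k (- t)) (fun t => - th (- t)).
Proof.
  intros A. split; intros t Ht; assert (Hm : a <= - t <= b) by lra.
  - eapply is_derive_eq; [apply is_derive_comp_opp, (arc_dg1 A Hm) | cbn; ring].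
  - eapply is_derive_eq; [apply is_derive_Ropp, is_derive_comp_opp, (arc_dg2 A Hm) | cbn; ring].
  - eapply is_derive_eq; [apply is_derive_Ropp, is_derive_comp_opp, (arc_de1 A Hm) | cbn; ring].
  - eapply is_derive_eq; [apply is_derive_comp_opp, (arc_de2 A Hm) | cbn; ring].
  - eapply is_derive_eq; [apply is_derive_Ropp, is_derive_comp_opp, (arc_dth A Hm) | cbn; ring].
  - rewrite <- (arc_unit A Hm). ring.
  - exact (arc_speed_pos A Hm).
  - exact (arc_rate_pos A Hm).
Qed.

Section ConvexArcBothWays.

Context {a b : R} {g1 g2 e1 e2 v k th : R -> R}.
Hypothesis A : convex_arc a b g1 g2 e1 e2 v k th.

Lemma arc_chord_in_disk_backward rr ti tj :
  0 < rr -> (forall t, a <= t <= b -> v t <= rr * k t) ->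
  a <= ti -> ti < tj -> tj <= b -> th tj - th ti <= PI ->
  (g1 ti - g1 tj) ^ 2 + (g2 ti - g2 tj) ^ 2
  <= 2 * rr * ((g1 ti - g1 tj) * - e2 tj + (g2 ti - g2 tj) * e1 tj).
Proof.
  intros Hrr Hcurvy Ha Hij Hb HPI.
  pose proof (arc_chord_in_disk (convex_arc_reverse A) rr (- tj) (- ti) Hrr)
    as Hdisk.
  cbv beta in Hdisk. rewrite !Ropp_involutive in Hdisk.
  enough (Hgoal : (g1 ti - g1 tj) ^ 2 + (- g2 ti - - g2 tj) ^ 2
                  <= 2 * rr * ((g1 ti - g1 tj) * - e2 tj + (- g2 ti - - g2 tj) * - e1 tj)).
  { replace ((- g2 ti - - g2 tj) ^ 2) with ((g2 ti - g2 tj) ^ 2) in Hgoal by ring.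
    replace ((- g2 ti - - g2 tj) * - e1 tj) with ((g2 ti - g2 tj) * e1 tj) in Hgoal by ring.
    exact Hgoal. }
  apply Hdisk; try lra.
  intros t Ht. apply Hcurvy. lra.
Qed.

Lemma arc_curvy_no_three_circle_points r rr s1 s2 s3 :
  0 < rr < r -> (forall t, a <= t <= b -> v t <= rr * k t) ->
  a <= s1 -> s1 < s2 -> s2 < s3 -> s3 <= b -> th s3 - th s1 <= PI ->
  g1 s1 ^ 2 + g2 s1 ^ 2 = r ^ 2 -> g1 s2 ^ 2 + g2 s2 ^ 2 = r ^ 2 ->
  g1 s3 ^ 2 + g2 s3 ^ 2 = r ^ 2 ->
  ~ (g1 s1 = g1 s2 /\ g2 s1 = g2 s2) -> ~ (g1 s1 = g1 s3 /\ g2 s1 = g2 s3) ->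
  ~ (g1 s2 = g1 s3 /\ g2 s2 = g2 s3) -> False.
Proof.
  intros Hrr Hcurvy H1 H12 H23 H3 HPI Hc1 Hc2 Hc3 N12 N13 N23.
  assert (Hcross : forall p q, a <= p -> p < q -> q <= b -> th q - th p <= PI ->
    g1 p ^ 2 + g2 p ^ 2 = r ^ 2 -> g1 q ^ 2 + g2 q ^ 2 = r ^ 2 ->
    ~ (g1 p = g1 q /\ g2 p = g2 q) ->
    0 < (g1 p * g2 q - g2 p * g1 q) * (g1 p * e1 p - g2 p * - e2 p) /\
    0 < (g1 q * g2 p - g2 q * g1 p) * (g1 q * e1 q - g2 q * - e2 q)).
  { intros p q Hp Hpq Hq Hth Cp Cq Npq. split.
    - apply (circle_chord_cross_sign r rr); try assumption.
      + rewrite <- (arc_unit A (t := p)) by lra. ring.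
      + intros [? ?]. apply Npq. split; congruence.
      + apply (arc_chord_in_disk A rr p q (proj1 Hrr) Hcurvy); lra.
    - apply (circle_chord_cross_sign r rr); try assumption.
      + rewrite <- (arc_unit A (t := q)) by lra. ring.
      + apply (arc_chord_in_disk_backward rr p q (proj1 Hrr) Hcurvy); lra. }
  pose proof (arc_th_le A s1 s2 H1 (Rlt_le _ _ H12) ltac:(lra)).
  pose proof (arc_th_le A s2 s3 ltac:(lra) (Rlt_le _ _ H23) H3).
  destruct (Hcross s1 s2) as [P12 P21]; try assumption; try lra.
  destruct (Hcross s1 s3) as [P13 P31]; try assumption; try lra.
  destruct (Hcross s2 s3) as [P23 P32]; try assumption; try lra.
  set (c12 := g1 s1 * g2 s2 - g2 s1 * g1 s2) in *.
  set (c13 := g1 s1 * g2 s3 - g2 s1 * g1 s3) in *.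
  set (c23 := g1 s2 * g2 s3 - g2 s2 * g1 s3) in *.
  replace (g1 s2 * g2 s1 - g2 s2 * g1 s1) with (- c12) in P21 by (unfold c12; ring).
  replace (g1 s3 * g2 s1 - g2 s3 * g1 s1) with (- c13) in P31 by (unfold c13; ring).
  replace (g1 s3 * g2 s2 - g2 s3 * g1 s2) with (- c23) in P32 by (unfold c23; ring).
  exact (circle_cross_signs_absurd _ _ _ _ _ _ P12 P13 P21 P23 P31 P32).
Qed.

End ConvexArcBothWays.

(** * Regular parametrized curves *)

Lemma C2_is_derive f t : C2 f -> is_derive f t (Derive f t).
Proof. intros Hf. apply Derive_correct, (Hf t). Qed.

Lemma C2_is_derive2 f t : C2 f -> is_derive (Derive f) t (Derive (Derive f) t).
Proof. intros Hf. apply Derive_correct, (Hf t). Qed.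

Lemma C2_continuous_Derive f t : C2 f -> continuous (Derive f) t.
Proof. intros Hf. apply (ex_derive_continuous (Derive f)), (Hf t). Qed.

Lemma C2_continuous_Derive2 f t : C2 f -> continuous (Derive (Derive f)) t.
Proof. intros Hf. apply (Hf t). Qed.

Definition tangent1 (x y : R -> R) (t : R) : R := Derive x t / speed x y t.
Definition tangent2 (x y : R -> R) (t : R) : R := Derive y t / speed x y t.
Definition turning_rate (x y : R -> R) (t : R) : R := curvature x y t * speed x y t.

(* The speed may vanish outside [a, b]; clamping the parameter makes the integrand
   continuous on all of R, so that [tangent_angle] is differentiable on the closed
   interval. *)
Definition clamp (a b s : R) : R := Rmax a (Rmin b s).

Definition tangent_angle (x y : R -> R) (a b t : R) : R :=
  RInt (fun s => turning_rate x y (clamp a b s)) a t.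

Lemma clamp_id a b s : a <= s <= b -> clamp a b s = s.
Proof. intros Hs. unfold clamp, Rmax, Rmin. repeat destruct Rle_dec; lra. Qed.

Lemma clamp_in a b s : a <= b -> a <= clamp a b s <= b.
Proof. intros Hab. unfold clamp, Rmax, Rmin. repeat destruct Rle_dec; lra. Qed.

Lemma continuous_clamp a b s : continuous (clamp a b) s.
Proof.
  intros P [eps HP]. exists eps. intros u Hu. apply HP.
  change (Rabs (clamp a b u - clamp a b s) < eps). change (Rabs (u - s) < eps) in Hu.
  unfold clamp, Rmax, Rmin, Rabs in *.
  repeat destruct Rle_dec; repeat destruct Rcase_abs; lra.
Qed.

Section RegularCurve.

Variables (x y : R -> R) (a b : R).
Hypothesis Cx : C2 x.
Hypothesis Cy : C2 y.
Hypothesis Hreg : forall t, a <= t <= b -> Derive x t <> 0 \/ Derive y t <> 0.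

Let sq_speed t := Derive x t ^ 2 + Derive y t ^ 2.

Lemma sq_speed_pos t : a <= t <= b -> 0 < sq_speed t.
Proof.
  intros Ht. unfold sq_speed.
  pose proof (pow2_ge_0 (Derive x t)). pose proof (pow2_ge_0 (Derive y t)).
  destruct (Hreg t Ht) as [Hnz | Hnz]; apply pow2_gt_0 in Hnz; lra.
Qed.

Lemma is_derive_sq_speed t :
  is_derive sq_speed t
    (2 * Derive x t * Derive (Derive x) t + 2 * Derive y t * Derive (Derive y) t).
Proof.
  unfold sq_speed. eapply is_derive_eq.
  - apply is_derive_Rplus; apply (is_derive_pow (Derive _) 2); apply C2_is_derive2; assumption.
  - cbn. ring.
Qed.

Lemma speed_sqr t : speed x y t ^ 2 = sq_speed t.
Proof.
  unfold speed. apply pow2_sqrt.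
  pose proof (pow2_ge_0 (Derive x t)). pose proof (pow2_ge_0 (Derive y t)).
  fold (sq_speed t). unfold sq_speed. lra.
Qed.

Lemma speed_pos t : a <= t <= b -> 0 < speed x y t.
Proof. intros Ht. apply sqrt_lt_R0, sq_speed_pos, Ht. Qed.

Lemma continuous_curvature t : a <= t <= b -> continuous (curvature x y) t.
Proof.
  intros Ht. unfold curvature, Rpower, Rdiv. fold (sq_speed t).
  apply (continuous_mult (K := R_AbsRing)).
  - apply (continuous_minus (V := R_NormedModule)); apply (continuous_mult (K := R_AbsRing)).
    + apply C2_continuous_Derive, Cx.
    + apply C2_continuous_Derive2, Cy.
    + apply C2_continuous_Derive, Cy.
    + apply C2_continuous_Derive2, Cx.
  - apply (continuous_Rinv_comp (fun s => exp (3 / 2 * ln (sq_speed s))));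
      [| apply Rgt_not_eq, exp_pos].
    apply (continuous_comp _ exp); [| apply continuous_exp].
    apply (continuous_mult (K := R_AbsRing)); [apply continuous_const |].
    apply (continuous_comp sq_speed ln); [| apply continuous_ln, sq_speed_pos, Ht].
    apply (ex_derive_continuous sq_speed). eexists. apply is_derive_sq_speed.
Qed.

Lemma continuous_turning_rate t : a <= t <= b -> continuous (turning_rate x y) t.
Proof.
  intros Ht. apply (continuous_mult (K := R_AbsRing)); [now apply continuous_curvature |].
  apply (continuous_sqrt_comp sq_speed), (ex_derive_continuous sq_speed).
  eexists. apply is_derive_sq_speed.
Qed.

Lemma turning_rate_eq t : a <= t <= b ->
  turning_rate x y t
  = (Derive x t * Derive (Derive y) t - Derive y t * Derive (Derive x) t) / sq_speed t.
Proof.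
  intros Ht. pose proof (sq_speed_pos t Ht). pose proof (speed_pos t Ht).
  unfold turning_rate, curvature. fold (sq_speed t).
  replace (Rpower (sq_speed t) (3 / 2)) with (sq_speed t * speed x y t).
  - field. lra.
  - replace (3 / 2) with (1 + / 2) by field.
    rewrite Rpower_plus, Rpower_1, Rpower_sqrt by assumption. reflexivity.
Qed.

Lemma is_derive_speed t : a <= t <= b ->
  is_derive (speed x y) t
    ((Derive x t * Derive (Derive x) t + Derive y t * Derive (Derive y) t) / speed x y t).
Proof.
  intros Ht. eapply is_derive_eq.
  - apply (is_derive_sqrt sq_speed), sq_speed_pos, Ht. apply is_derive_sq_speed.
  - cbn. change (sqrt (sq_speed t)) with (speed x y t). pose proof (speed_pos t Ht). field. lra.
Qed.

Lemma is_derive_tangent1 t : a <= t <= b ->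
  is_derive (tangent1 x y) t (- turning_rate x y t * tangent2 x y t).
Proof.
  intros Ht. pose proof (speed_pos t Ht). pose proof (speed_sqr t) as Hsq.
  eapply is_derive_eq.
  - apply is_derive_div; [apply C2_is_derive2, Cx | apply is_derive_speed, Ht | lra].
  - cbn. rewrite turning_rate_eq by exact Ht. unfold tangent2. rewrite <- Hsq.
    apply Rminus_diag_uniq.
    transitivity (Derive (Derive x) t * (speed x y t ^ 2 - (Derive x t ^ 2 + Derive y t ^ 2))
                  / speed x y t ^ 3); [field; lra |].
    rewrite Hsq. unfold sq_speed. field. lra.
Qed.

Lemma is_derive_tangent2 t : a <= t <= b ->
  is_derive (tangent2 x y) t (turning_rate x y t * tangent1 x y t).
Proof.
  intros Ht. pose proof (speed_pos t Ht). pose proof (speed_sqr t) as Hsq.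
  eapply is_derive_eq.
  - apply is_derive_div; [apply C2_is_derive2, Cy | apply is_derive_speed, Ht | lra].
  - cbn. rewrite turning_rate_eq by exact Ht. unfold tangent1. rewrite <- Hsq.
    apply Rminus_diag_uniq.
    transitivity (Derive (Derive y) t * (speed x y t ^ 2 - (Derive x t ^ 2 + Derive y t ^ 2))
                  / speed x y t ^ 3); [field; lra |].
    rewrite Hsq. unfold sq_speed. field. lra.
Qed.

Lemma tangent_unit t : a <= t <= b -> tangent1 x y t ^ 2 + tangent2 x y t ^ 2 = 1.
Proof.
  intros Ht. pose proof (speed_pos t Ht). pose proof (speed_sqr t) as Hsq.
  unfold tangent1, tangent2, sq_speed in *.
  replace 1 with ((Derive x t ^ 2 + Derive y t ^ 2) / speed x y t ^ 2)
    by (rewrite <- Hsq; field; lra).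
  field. lra.
Qed.

Lemma continuous_clamped_turning_rate s : a <= b ->
  continuous (fun u => turning_rate x y (clamp a b u)) s.
Proof.
  intros Hab. apply (continuous_comp (clamp a b)); [apply continuous_clamp |].
  apply continuous_turning_rate, clamp_in, Hab.
Qed.

Lemma is_derive_tangent_angle t : a <= t <= b ->
  is_derive (tangent_angle x y a b) t (turning_rate x y t).
Proof.
  intros Ht. assert (Hab : a <= b) by lra.
  eapply is_derive_eq.
  - apply (is_derive_RInt (fun u => turning_rate x y (clamp a b u)) _ a);
      [| apply continuous_clamped_turning_rate, Hab].
    apply filter_forall. intros u.
    apply (RInt_correct (fun w => turning_rate x y (clamp a b w))), ex_RInt_continuous.
    intros w _. apply continuous_clamped_turning_rate, Hab.
  - cbv beta. now rewrite clamp_id.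
Qed.

Lemma tangent_angle_total : a <= b ->
  tangent_angle x y a b b - tangent_angle x y a b a = total_curvature x y a b.
Proof.
  intros Hab. unfold tangent_angle, total_curvature. rewrite RInt_point, Rminus_0_r.
  apply RInt_ext. intros t Ht. rewrite Rmin_left, Rmax_right in Ht by exact Hab.
  unfold turning_rate. rewrite clamp_id; [reflexivity | lra].
Qed.

Lemma curve_convex_arc cx cy :
  (forall t, a <= t <= b -> 0 < curvature x y t) ->
  convex_arc a b (fun t => x t - cx) (fun t => y t - cy) (tangent1 x y) (tangent2 x y)
    (speed x y) (turning_rate x y) (tangent_angle x y a b).
Proof.
  intros Hconvex. split; intros t Ht; pose proof (speed_pos t Ht) as Hv.
  - eapply is_derive_eq;
      [apply is_derive_Rminus; [apply C2_is_derive, Cx | apply is_derive_Rconst] |].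
    unfold tangent1. cbn. field. lra.
  - eapply is_derive_eq;
      [apply is_derive_Rminus; [apply C2_is_derive, Cy | apply is_derive_Rconst] |].
    unfold tangent2. cbn. field. lra.
  - now apply is_derive_tangent1.
  - now apply is_derive_tangent2.
  - now apply is_derive_tangent_angle.
  - now apply tangent_unit.
  - exact Hv.
  - unfold turning_rate. pose proof (Hconvex t Ht). nra.
Qed.

End RegularCurve.

(** * Three points on a circle *)

Lemma continuous_avoid_value_side (f : R -> R) a b c : a <= b ->
  (forall t, a <= t <= b -> continuous f t) -> (forall t, a <= t <= b -> f t <> c) ->
  (forall t, a <= t <= b -> f t < c) \/ (forall t, a <= t <= b -> c < f t).
Proof.
  intros Hab Hf Hc.
  assert (Ha : f a - c <> 0) by (apply Rminus_eq_contra, Hc; lra).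
  assert (Hsame : forall t, a <= t <= b -> 0 < (f a - c) * (f t - c)).
  { intros t Ht.
    destruct (Rlt_or_le 0 ((f a - c) * (f t - c))) as [Hpos | Hnpos]; [exact Hpos | exfalso].
    assert (Ht' : f t - c <> 0) by (apply Rminus_eq_contra, Hc; lra).
    destruct (Ranalysis5.IVT_interv (fun u => - ((f a - c) * (f u - c))) a t) as [z [Hz Hfz]].
    - intros u Hu. apply continuity_pt_filterlim.
      apply (continuous_opp (fun u => (f a - c) * (f u - c))).
      apply (continuous_mult (fun _ => f a - c) (fun u => f u - c)); [apply continuous_const |].
      apply (continuous_minus f (fun _ => c)); [apply Hf; lra | apply continuous_const].
    - destruct (Req_dec a t) as [<- | Hat]; [nra | lra].
    - nra.
    - assert ((f a - c) * (f t - c) <> 0) by (apply Rmult_integral_contrapositive; tauto). lra.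
    - apply (Hc z); [lra |]. apply Rminus_diag_uniq.
      apply (Rmult_eq_reg_l (f a - c)); [lra | exact Ha].
  }
  destruct (Rlt_or_le (f a) c) as [Hlt | Hle]; [left | right]; intros t Ht;
    specialize (Hsame t Ht); nra.
Qed.

Lemma sort_three (P : R -> Prop) (N : R -> R -> Prop) t1 t2 t3 :
  (forall p q, N p q -> N q p) -> (forall p, ~ N p p) ->
  P t1 -> P t2 -> P t3 -> N t1 t2 -> N t1 t3 -> N t2 t3 ->
  exists s1 s2 s3, s1 < s2 < s3 /\ P s1 /\ P s2 /\ P s3 /\ N s1 s2 /\ N s1 s3 /\ N s2 s3.
Proof.
  intros Hsym Hirr P1 P2 P3 N12 N13 N23.
  assert (Hlt : forall p q, N p q -> p < q \/ q < p).
  { intros p q Hpq. destruct (Rtotal_order p q) as [h | [<- | h]]; auto. now apply Hirr in Hpq. }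
  destruct (Hlt _ _ N12), (Hlt _ _ N13), (Hlt _ _ N23);
    first
      [ exists t1, t2, t3; split; [lra |] | exists t1, t3, t2; split; [lra |]
      | exists t2, t1, t3; split; [lra |] | exists t2, t3, t1; split; [lra |]
      | exists t3, t1, t2; split; [lra |] | exists t3, t2, t1; split; [lra |]
      | exfalso; lra ];
    repeat split; auto.
Qed.

Lemma ordered_circle_points (x y : R -> R) (a b cx cy r : R) :
  (exists t1 t2 t3,
      a <= t1 <= b /\ a <= t2 <= b /\ a <= t3 <= b /\
      ~ same_point x y t1 t2 /\ ~ same_point x y t1 t3 /\ ~ same_point x y t2 t3 /\
      on_circle x y cx cy r t1 /\ on_circle x y cx cy r t2 /\ on_circle x y cx cy r t3) ->
  exists s1 s2 s3, s1 < s2 < s3 /\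
    (a <= s1 <= b /\ on_circle x y cx cy r s1) /\ (a <= s2 <= b /\ on_circle x y cx cy r s2) /\
    (a <= s3 <= b /\ on_circle x y cx cy r s3) /\
    ~ same_point x y s1 s2 /\ ~ same_point x y s1 s3 /\ ~ same_point x y s2 s3.
Proof.
  intros (t1 & t2 & t3 & I1 & I2 & I3 & N12 & N13 & N23 & Hc1 & Hc2 & Hc3).
  apply (sort_three (fun t => a <= t <= b /\ on_circle x y cx cy r t)
           (fun p q => ~ same_point x y p q) t1 t2 t3); auto.
  - intros p q Hpq [Hx Hy]. now apply Hpq.
  - intros p Hpp. now apply Hpp.
Qed.

Section ConvexCurveAndCircle.

Variables (x y : R -> R) (a b cx cy r : R).
Hypothesis Cx : C2 x.
Hypothesis Cy : C2 y.
Hypothesis Hreg : forall t, a <= t <= b -> Derive x t <> 0 \/ Derive y t <> 0.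
Hypothesis Hconvex : forall t, a <= t <= b -> 0 < curvature x y t.
Hypothesis Htotal : total_curvature x y a b <= PI.
Hypothesis Hr : 0 < r.

Let arc := curve_convex_arc x y a b Cx Cy Hreg cx cy Hconvex.

Lemma curve_turning_le_PI s1 s3 : a <= s1 -> s1 <= s3 -> s3 <= b ->
  tangent_angle x y a b s3 - tangent_angle x y a b s1 <= PI.
Proof.
  intros H1 H13 H3.
  pose proof (arc_th_le arc a s1 (Rle_refl a) H1 ltac:(lra)).
  pose proof (arc_th_le arc s3 b ltac:(lra) H3 (Rle_refl b)).
  pose proof (tangent_angle_total x y a b ltac:(lra)). lra.
Qed.

Lemma curve_flat_no_three_circle_points s1 s2 s3 :
  (forall t, a <= t <= b -> curvature x y t < 1 / r) ->
  a <= s1 -> s1 < s2 -> s2 < s3 -> s3 <= b ->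
  on_circle x y cx cy r s1 -> on_circle x y cx cy r s2 -> on_circle x y cx cy r s3 -> False.
Proof.
  intros Hflat H1 H12 H23 H3.
  apply (arc_flat_no_three_circle_points arc r s1 s2 s3 Hr); try lra.
  - intros t Ht. pose proof (speed_pos x y a b Hreg t Ht).
    assert (r * curvature x y t < 1).
    { replace 1 with (r * (1 / r)) by (field; lra). apply Rmult_lt_compat_l; auto. }
    unfold turning_rate. nra.
  - apply curve_turning_le_PI; lra.
Qed.

Lemma curve_curvy_no_three_circle_points s1 s2 s3 :
  (forall t, a <= t <= b -> 1 / r < curvature x y t) ->
  a <= s1 -> s1 < s2 -> s2 < s3 -> s3 <= b ->
  on_circle x y cx cy r s1 -> on_circle x y cx cy r s2 -> on_circle x y cx cy r s3 ->
  ~ same_point x y s1 s2 -> ~ same_point x y s1 s3 -> ~ same_point x y s2 s3 -> False.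
Proof.
  intros Hcurvy H1 H12 H23 H3 Hc1 Hc2 Hc3 N12 N13 N23.
  destruct (continuity_ab_min (curvature x y) a b) as [m [Hmin Hm]]; [lra | |].
  { intros t Ht. apply continuity_pt_filterlim, (continuous_curvature x y a b Cx Cy Hreg t Ht). }
  pose proof (Hcurvy m Hm). pose proof (Hconvex m Hm).
  apply (arc_curvy_no_three_circle_points arc r (/ curvature x y m) s1 s2 s3);
    try assumption; try lra.
  - split; [now apply Rinv_0_lt_compat |].
    assert (Hinv : / r < curvature x y m) by (unfold Rdiv in *; lra).
    rewrite <- (Rinv_inv r). apply Rinv_lt_contravar; [| exact Hinv].
    apply Rmult_lt_0_compat; [now apply Rinv_0_lt_compat | lra].
  - intros t Ht. pose proof (speed_pos x y a b Hreg t Ht). pose proof (Hmin t Ht).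
    unfold turning_rate.
    replace (/ curvature x y m * (curvature x y t * speed x y t))
      with (curvature x y t / curvature x y m * speed x y t) by (field; lra).
    assert (1 <= curvature x y t / curvature x y m)
      by (apply (Rmult_le_reg_r (curvature x y m)); [lra | field_simplify; lra]).
    nra.
  - apply curve_turning_le_PI; lra.
  - intros [E1 E2]. apply N12. split; lra.
  - intros [E1 E2]. apply N13. split; lra.
  - intros [E1 E2]. apply N23. split; lra.
Qed.

End ConvexCurveAndCircle.

Theorem theorem4p8 (x y : R -> R) (a b : R) (cx cy r : R) :
  a < b ->
  C2 x -> C2 y ->
  (* nonvanishing first and second derivative vectors on [a,b] *)
  (forall t, a <= t <= b -> Derive x t <> 0 \/ Derive y t <> 0) ->
  (forall t, a <= t <= b ->
     Derive (Derive x) t <> 0 \/ Derive (Derive y) t <> 0) ->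
  (* convex: positive curvature *)
  (forall t, a <= t <= b -> 0 < curvature x y t) ->
  total_curvature x y a b <= PI ->
  0 < r ->
  (* three distinct points of the curve on the circle *)
  (exists t1 t2 t3,
      a <= t1 <= b /\ a <= t2 <= b /\ a <= t3 <= b /\
      ~ same_point x y t1 t2 /\ ~ same_point x y t1 t3 /\ ~ same_point x y t2 t3 /\
      on_circle x y cx cy r t1 /\ on_circle x y cx cy r t2 /\ on_circle x y cx cy r t3) ->
  exists t, a <= t <= b /\ curvature x y t = 1 / r.
Proof.
  intros Hab Cx Cy Hreg _ Hconvex Htotal Hr Hpts.
  destruct (ordered_circle_points x y a b cx cy r Hpts)
    as (s1 & s2 & s3 & [H12 H23] & [I1 Hc1] & [I2 Hc2] & [I3 Hc3] & N12 & N13 & N23).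
  apply NNPP. intros Hnone.
  destruct (continuous_avoid_value_side (curvature x y) a b (1 / r)) as [Hflat | Hcurvy].
  - lra.
  - exact (continuous_curvature x y a b Cx Cy Hreg).
  - intros t Ht Heq. apply Hnone. now exists t.
  - apply (curve_flat_no_three_circle_points x y a b cx cy r Cx Cy Hreg Hconvex Htotal Hr
             s1 s2 s3 Hflat); tauto.
  - apply (curve_curvy_no_three_circle_points x y a b cx cy r Cx Cy Hreg Hconvex Htotal Hr
             s1 s2 s3 Hcurvy); tauto.
Qed.
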